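(* Let $G$ be a connected (finite, simple) graph, let $\mathcal{F}$ be a maximum induced forest of $G$ having the fewest connected components among all maximum induced forests of $G$, let $H$ be the contracted graph and let $B$ be a skeleton of $H$ whose configuration vector is lexicographically highest among all skeletons of $H$, with inner skeleton $B_1$ (all as defined in the context). Let $v$ be a non-tree vertex of degree exactly $2$ in $B_1$ whose two neighbors in $B_1$ are a tree vertex $x_T$ and a vertex $x'$, where the tree $T$ consists of a single edge $u_1u_2$. If $v$ has no 2-edge in $H$ to any tree vertex other than $x_T$, then $v$ has no edge in $H$ to any tree vertex other than $x_T$.
   Context: A maximum induced forest of $G$ is an induced forest with the maximum number of vertices. Let $\mathcal{T}$ be the set of connected components (trees) of $\mathcal{F}$ and $S=V(G)\setminus V(\mathcal{F})$. The graph $H$ has vertex set $\{x_T : T\in\mathcal{T}\}\cup S$ (the $x_T$ are tree vertices, the vertices of $S$ non-tree vertices) and edge set consisting of all edges of $G[S]$ together with all pairs $ux_T$ with $u\in S$, $T\in\mathcal{T}$ such that $u$ has at least one neighbor in $V(T)$ in $G$. An edge $ux_T$ of $H$ is a 2-edge if $u$ has at least two neighbors in $V(T)$ in $G$; all other edges of $H$ are 1-edges. A skeleton is a spanning tree of $H$ rooted at some tree vertex, with all edges directed towards the root. For a skeleton $B$ with root $r$, the level $\ell_B(v)$ of a vertex $v$ is the number of vertices on the path from $v$ to $r$ in $B$, and the configuration vector of $B$ is $\langle |E_2(B)|, \sum_{v:\ell_B(v)=1}\deg_B(v), \ldots,\sum_{v:\ell_B(v)=|V(H)|}\deg_B(v)\rangle$,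 where $E_2(B)$ is the set of 2-edges of $B$ and $\deg_B(v)$ the total degree of $v$ in $B$. Let $L_S$ be the set of vertices of $S$ that are leaves of $B$; the inner skeleton is $B_1=B[V(B)\setminus L_S]$. *)

(* Finite simple graph: T : finType, e : rel T symmetric, irreflexive. *)
From mathcomp Require Import all_boot.
Set Implicit Arguments. Unset Strict Implicit. Unset Printing Implicit Defensive.

Section Defs.
Variables (T : finType) (e : rel T).

Definition induced_forest (F : {set T}) : Prop :=
  ~ exists c : seq T, [/\ 3 <= size c, uniq c, all (fun x => x \in F) c & cycle e c].

Definition eF (F : {set T}) : rel T := [rel x y | [&& x \in F, y \in F & e x y]].

Definition trees (F : {set T}) : {set {set T}} :=
  [set [set y in F | connect (eF F) x y] | x in F].

Definition maximum_induced_forest (F : {set T}) : Prop :=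
  induced_forest F /\ forall F', induced_forest F' -> #|F'| <= #|F|.

Definition min_comp_max_forest (F : {set T}) : Prop :=
  maximum_induced_forest F /\
  forall F', maximum_induced_forest F' -> #|trees F| <= #|trees F'|.

(* vertices of H: inl u for a non-tree vertex u in S, inr C for the tree vertex x_T, C = V(T) *)
Definition Hv : finType := (T + {set T})%type.

Definition Hvert (F : {set T}) (z : Hv) : bool :=
  match z with inl u => u \notin F | inr C => C \in trees F end.

Definition Hadj (z w : Hv) : bool :=
  match z, w with
  | inl u, inl u' => e u u'
  | inl u, inr C => [exists y in C, e u y]
  | inr C, inl u => [exists y in C, e u y]
  | inr _, inr _ => false
  end.

Definition Hedge (F : {set T}) (z w : Hv) : bool := [&& Hvert F z, Hvert F w & Hadj z w].

Definition two_edge (u : T) (C : {set T}) : bool := 2 <= #|[set y in C | e u y]|.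

(* skeleton: spanning tree b (symmetric edge relation) of H, rooted at the tree vertex r *)
Definition skeleton (F : {set T}) (b : rel Hv) (r : Hv) : Prop :=
  [/\ (forall z w, b z w = b w z),
      (forall z w, b z w -> Hedge F z w),
      (match r with inr C => C \in trees F | inl _ => false end),
      (forall z w, Hvert F z -> Hvert F w -> connect b z w)
    & ~ exists c : seq Hv, [/\ 3 <= size c, uniq c & cycle b c]].

(* level: number of vertices on the (unique) path from z to r in b *)
Definition level (b : rel Hv) (r z : Hv) : nat :=
  (find (fun k => [exists t : k.-tuple Hv,
            [&& path b z t, last z t == r & uniq (z :: t)]])
        (iota 0 #|Hv|)).+1.

Definition degB (b : rel Hv) (z : Hv) : nat := #|[set w | b z w]|.

(* number of 2-edges of b (each edge u x_T counted once) *)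
Definition n2edges (b : rel Hv) : nat :=
  #|[set p : T * {set T} | b (inl p.1) (inr p.2) && two_edge p.1 p.2]|.

Definition nH (F : {set T}) : nat := #|[set z | Hvert F z]|.

Definition config (F : {set T}) (b : rel Hv) (r : Hv) : seq nat :=
  n2edges b :: [seq \sum_(z | Hvert F z && (level b r z == j)) degB b z
                | j <- iota 1 (nH F)].

Fixpoint lexle (s t : seq nat) : bool :=
  match s, t with
  | [::], _ => true
  | _ :: _, [::] => false
  | x :: s', y :: t' => (x < y) || ((x == y) && lexle s' t')
  end.

Definition best_skeleton (F : {set T}) (b : rel Hv) (r : Hv) : Prop :=
  skeleton F b r /\
  forall b' r', skeleton F b' r' -> lexle (config F b' r') (config F b r).

Definition leafS (F : {set T}) (b : rel Hv) (z : Hv) : bool :=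
  match z with inl u => (u \notin F) && (degB b z == 1) | inr _ => false end.

Definition inner_vert (F : {set T}) (b : rel Hv) (z : Hv) : bool :=
  Hvert F z && ~~ leafS F b z.
Definition inner_edge (F : {set T}) (b : rel Hv) : rel Hv :=
  [rel z w | [&& b z w, inner_vert F b z & inner_vert F b w]].

End Defs.

From mathcomp Require Import all_boot.
Set Implicit Arguments. Unset Strict Implicit. Unset Printing Implicit Defensive.

(* Let v be adjacent to the two-vertex tree T = {a, b} through a, and suppose v
   had an edge to another tree C.  Since all edges from v to other trees are
   1-edges, replacing the leaf b by v gives an induced forest F' = F - b + v:
   a cycle through v would close up inside one component of F - b, hence use two
   neighbours of v in one tree of F.  F' has the size of F, but T and C are
   merged through v, so F' has fewer components, contradicting the choice of F. *)

Lemma card_imset_lt_factor (A R R' : finType) (X : {set A})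
    (f : A -> R) (g : A -> R') x y :
  {in X &, forall x y, f x = f y -> g x = g y} ->
  x \in X -> y \in X -> f x != f y -> g x = g y ->
  #|g @: X| < #|f @: X|.
Proof.
move=> fg xX yX fxy gxy.
pose k z := g (odflt x [pick w in X | f w == z]).
have kf : {in X, forall z, k (f z) = g z}.
  move=> z zX; rewrite /k; case: pickP => [w /andP[wX /eqP fw]|none] /=.
    exact: fg.
  by have := none z; rewrite zX eqxx.
have -> : g @: X = k @: (f @: X).
  by rewrite -imset_comp; apply: eq_in_imset => z zX /=; rewrite kf.
rewrite ltn_neqAle leq_imset_card andbT; apply/negP => /imset_injP k_inj.
have := k_inj _ _ (imset_f f xX) (imset_f f yX).
by rewrite !kf // => /(_ gxy) fxy_eq; rewrite fxy_eq eqxx in fxy.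
Qed.

Section InducedForests.

Variables (T : finType) (e : rel T).
Hypothesis e_sym : symmetric e.
Implicit Types (F K : {set T}) (v x y : T).

Definition component (F : {set T}) (x : T) : {set T} :=
  [set y in F | connect (eF e F) x y].

Lemma trees_componentE F : trees e F = component F @: F.
Proof. by []. Qed.

Lemma eF_sym F : symmetric (eF e F).
Proof. by move=> x y; rewrite /eF /= e_sym andbCA. Qed.

Lemma mem_component F x : x \in F -> x \in component F x.
Proof. by move=> xF; rewrite inE xF connect0. Qed.

Lemma component_eq F x y : y \in component F x -> component F y = component F x.
Proof.
rewrite inE => /andP[_ cxy]; have csym := sym_connect_sym (eF_sym F).
apply/setP=> z; rewrite !inE; case: (z \in F) => //=.
apply/idP/idP; first exact: connect_trans.
by apply: connect_trans; rewrite csym.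
Qed.

Lemma trees_component F K y : K \in trees e F -> y \in K -> K = component F y.
Proof. by move=> /imsetP[x _ ->] yK; rewrite (component_eq yK). Qed.

Lemma trees_sub F K y : K \in trees e F -> y \in K -> y \in F.
Proof. by move=> /imsetP[x _ ->]; rewrite inE => /andP[]. Qed.

Lemma induced_forest_subset F F' :
  F' \subset F -> induced_forest e F -> induced_forest e F'.
Proof.
move=> /subsetP sF'F forestF [c [size_c uniq_c /allP c_sub cycle_c]].
by apply: forestF; exists c; split=> //; apply/allP => y /c_sub /sF'F.
Qed.

Lemma induced_forest_setU1 F v :
  induced_forest e F ->
  (forall x z, x \in F -> z \in F -> e v x -> e v z ->
     connect (eF e F) x z -> x = z) ->
  induced_forest e (v |: F).
Proof.
move=> forestF v_nbrs [c [size_c uniq_c /allP c_sub cycle_c]].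
have [vc|vNc] := boolP (v \in c); last first.
  apply: forestF; exists c; split=> //; apply/allP => y yc.
  by case/setU1P: (c_sub y yc) => // yv; rewrite -yv yc in vNc.
case: (rot_to vc) => i [|x q] rot_c; first by rewrite -(size_rot i) rot_c in size_c.
have size_q : 0 < size q by rewrite -(size_rot i) rot_c in size_c.
move: uniq_c cycle_c; rewrite -(rot_uniq i) -(rot_cycle i) rot_c /=.
rewrite rcons_path => /andP[vNxq /andP[xNq _]] /and3P[evx path_q ezv].
have in_F y : y \in x :: q -> y \in F.
  move=> yq; have : y \in rot i c by rewrite rot_c inE yq orbT.
  rewrite mem_rot => /c_sub /setU1P[yv|//].
  by rewrite -yv yq in vNxq.
have zq : last x q \in q.
  by move: size_q; case: (q) => // y s _ /=; apply: mem_last.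
set z := last x q in ezv zq.
have xNz : x != z by apply: contraNneq xNq => ->.
have in_Fz : z \in F by apply: in_F; rewrite inE zq orbT.
have evz : e v z by rewrite e_sym.
have cxz : connect (eF e F) x z.
  apply/connectP; exists q => //.
  apply: (sub_in_path (P := mem F)) path_q; last by apply/allP => y /in_F.
  by move=> y w yF wF eyw; rewrite /eF /= yF wF.
by move/eqP: xNz; apply; apply: v_nbrs => //; rewrite in_F ?mem_head.
Qed.

Lemma card_trees_lt F F' (s : T -> T) a c :
  {in F, forall x, s x \in F'} ->
  (forall x y, eF e F x y -> connect (eF e F') (s x) (s y)) ->
  {in F', forall y, exists2 x, x \in F & connect (eF e F') (s x) y} ->
  a \in F -> c \in F -> ~~ connect (eF e F) a c ->
  connect (eF e F') (s a) (s c) ->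
  #|trees e F'| < #|trees e F|.
Proof.
move=> sF' s_edge s_onto aF cF aNc sac.
pose h x := component F' (s x).
have s_connect x y : connect (eF e F) x y -> connect (eF e F') (s x) (s y).
  move=> /connectP[p + ->]; elim: p x => [|w p IHp] x /=; first by rewrite connect0.
  by case/andP=> /s_edge sxw /IHp; apply: connect_trans.
have -> : trees e F' = h @: F.
  apply/setP=> K; apply/imsetP/imsetP => [[y /[dup] yF' /s_onto[x xF sxy] ->]|[x xF ->]].
    by exists x => //; apply: component_eq; rewrite inE yF'.
  by exists (s x); rewrite ?sF'.
rewrite trees_componentE; apply: (card_imset_lt_factor _ aF cF).
- move=> x y xF yF cxy; apply/esym/component_eq.
  have : y \in component F x by rewrite cxy mem_component.
  by rewrite !inE => /andP[/sF' -> /s_connect].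
- by apply: contraNneq aNc => cac; have := mem_component cF; rewrite -cac inE => /andP[].
- by apply/esym/component_eq; rewrite inE sac andbT sF'.
Qed.

End InducedForests.

Section LeafExchange.

Variables (T : finType) (e : rel T).
Hypotheses (e_sym : symmetric e) (e_irr : irreflexive e).
Variables (F : {set T}) (v a b : T).
Hypotheses (HF : min_comp_max_forest e F) (vNF : v \notin F).
Hypotheses (ab_tree : [set a; b] \in trees e F) (aNb : a != b) (e_va : e v a).
Hypothesis Hno2 : forall C, C \in trees e F -> C != [set a; b] ->
  ~~ (Hedge e F (inl v) (inr C) && two_edge e v C).

Local Notation component := (component e).
Local Notation mem_component := (mem_component e).
Local Notation component_eq := (component_eq e_sym).
Local Notation trees_component := (trees_component e_sym).
Local Notation eF_sym := (eF_sym e_sym).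
Local Notation F' := (v |: (F :\ b)).

Let aT : a \in [set a; b]. Proof. by rewrite !inE eqxx. Qed.
Let bT : b \in [set a; b]. Proof. by rewrite !inE eqxx orbT. Qed.
Let aF : a \in F. Proof. exact: trees_sub ab_tree aT. Qed.
Let bF : b \in F. Proof. exact: trees_sub ab_tree bT. Qed.

Lemma leaf_neighbor y : eF e F b y -> y = a.
Proof.
move=> eby; have : y \in component F b by move: (eby) => /and3P[_ yF _]; rewrite inE yF connect1.
rewrite -(trees_component ab_tree bT) => /set2P[//|yb].
by move: eby; rewrite yb /eF /= e_irr !andbF.
Qed.

Lemma exchange_forest : induced_forest e F'.
Proof.
apply: (induced_forest_setU1 e_sym) => [|x z]; first exact: induced_forest_subset (subsetDl F _) HF.1.1.
rewrite !inE => /andP[xNb xF] /andP[zNb zF] evx evz cxz.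
have {}cxz : connect (eF e F) x z.
  apply: connect_sub cxz => y w; rewrite /eF /= !inE => /and3P[/andP[_ yF] /andP[_ wF] eyw].
  by apply: connect1; rewrite /eF /= yF wF.
set K := component F x; have KT : K \in trees e F by apply: imset_f.
have zK : z \in K by rewrite inE zF.
have [KE|KNab] := eqVneq K [set a; b].
  move: (mem_component xF) zK; rewrite -/K KE !inE (negbTE xNb) (negbTE zNb) !orbF.
  by move=> /eqP -> /eqP ->.
apply/eqP; apply: contraNT (Hno2 KT KNab) => xNz; apply/andP; split.
  by rewrite /Hedge /= vNF KT; apply/existsP; exists x; rewrite mem_component.
rewrite /two_edge; apply: leq_trans (subset_leq_card (_ : [set x; z] \subset _)).
  by rewrite cards2 xNz.
by apply/subsetP => y /set2P[]->; rewrite inE ?mem_component ?evx ?zK ?evz.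
Qed.

Lemma card_exchange : #|F'| = #|F|.
Proof. by rewrite cardsU1 (cardsD1 b F) bF !inE (negbTE vNF) andbF. Qed.

Lemma exchange_trees_lt c :
  c \in F -> ~~ connect (eF e F) a c -> e v c -> #|trees e F'| < #|trees e F|.
Proof.
move=> cF aNc evc; pose s x := if x == b then a else x.
have cNb : c != b.
  apply: contraNneq aNc => ->; have : b \in component F a by rewrite -(trees_component ab_tree aT).
  by rewrite inE => /andP[].
have F'_edge x : x \in F' -> e v x -> eF e F' v x.
  by move=> xF' evx; rewrite /eF /= xF' evx !inE eqxx.
have aF' : a \in F' by rewrite !inE aNb aF orbT.
have cF' : c \in F' by rewrite !inE cNb cF orbT.
apply: (card_trees_lt e_sym (s := s) _ _ _ aF cF aNc).
- by move=> x xF; rewrite /s; case: eqP => [//|/eqP xNb]; rewrite !inE xNb xF orbT.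
- move=> x y exy; rewrite /s.
  have [xb|xNb] := eqVneq x b.
    by move: exy; rewrite xb => /leaf_neighbor ->; rewrite (negbTE aNb).
  have [yb|yNb] := eqVneq y b.
    by move: exy; rewrite yb eF_sym => /leaf_neighbor ->.
  by move: exy => /and3P[xF yF exy]; apply: connect1; rewrite /eF /= !inE xNb yNb xF yF !orbT.
- move=> y; rewrite /s !inE => /orP[/eqP->|/andP[yNb yF]].
    by exists a => //; rewrite (negbTE aNb) connect1 // eF_sym F'_edge.
  by exists y => //; rewrite (negbTE yNb).
- rewrite /s (negbTE aNb) (negbTE cNb); apply: (@connect_trans _ _ v).
    by rewrite connect1 // eF_sym F'_edge.
  by rewrite connect1 // F'_edge.
Qed.

Lemma no_edge_to_other_tree C :
  C \in trees e F -> C != [set a; b] -> ~~ Hedge e F (inl v) (inr C).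
Proof.
move=> CT CNab; apply/negP; rewrite /Hedge /= => /and3P[_ _ /existsP[c /andP[cC evc]]].
have maxF' : maximum_induced_forest e F'.
  by split=> [|F'' /HF.1.2]; rewrite ?card_exchange //; apply: exchange_forest.
have := HF.2 _ maxF'; rewrite leqNgt => /negP; apply.
apply: (exchange_trees_lt (trees_sub CT cC) _ evc); apply: contra CNab => cac.
rewrite (trees_component CT cC) (trees_component ab_tree aT) (@component_eq _ a) //.
by rewrite inE (trees_sub CT cC).
Qed.

End LeafExchange.

Theorem lemma28 (T : finType) (e : rel T)
  (e_sym : symmetric e) (e_irr : irreflexive e)
  (G_conn : forall x y : T, connect e x y)
  (F : {set T}) (HF : min_comp_max_forest e F)
  (b : rel (Hv T)) (r : Hv T) (HB : best_skeleton e F b r)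
  (v u1 u2 : T) (x' : Hv T)
  (Hv_S : v \notin F)
  (Hv_B1 : inner_vert e F b (inl v))
  (HT : [set u1; u2] \in trees e F) (Hu12 : u1 != u2) (Hu12e : e u1 u2)
  (Hx' : x' != inr [set u1; u2])
  (Hnb : [set w | inner_edge e F b (inl v) w] = [set inr [set u1; u2]; x'])
  (Hno2 : forall C, C \in trees e F -> C != [set u1; u2] ->
            ~~ (Hedge e F (inl v) (inr C) && two_edge e v C)) :
  forall C, C \in trees e F -> C != [set u1; u2] -> ~~ Hedge e F (inl v) (inr C).
Proof.
have [[_ B_sub_H _ _ _] _] := HB.
have : inr [set u1; u2] \in [set w | inner_edge e F b (inl v) w] by rewrite Hnb !inE eqxx.
rewrite inE => /and3P[/B_sub_H/and3P[_ _ /existsP[y /andP[/set2P[]-> evy]]] _ _].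
  exact: no_edge_to_other_tree.
have u21 : [set u1; u2] = [set u2; u1] := setUC _ _.
rewrite u21 in HT Hno2 *.
by apply: no_edge_to_other_tree; rewrite 1?eq_sym.
Qed.
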